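(* Let $A,B\in\mathbb{R}_+^{n\times n}$ be two circulant matrices such that $\lambda(A)=\lambda(B)$ and $A\leq B$ (entrywise). Then $\mathrm{Attr}(A)\subseteq\mathrm{Attr}(B)$.
   Context: Max algebra: on $\mathbb{R}_+=[0,\infty)$ use $a\oplus b=\max(a,b)$ and ordinary multiplication; for nonnegative matrices $(A\otimes B)_{i,k}=\max_j A_{i,j}B_{j,k}$, and $A^t$ denotes the $t$-th max-algebraic power. A value $\lambda\in\mathbb{R}_+$ is a (max-algebraic) eigenvalue of $A\in\mathbb{R}_+^{n\times n}$ if $A\otimes x=\lambda x$ for some nonzero $x\in\mathbb{R}_+^n$; $\lambda(A)$ denotes the greatest eigenvalue, which equals the maximum cycle geometric mean $\max_{k=1}^n\max_{i_1,\dots,i_k}(A_{i_1,i_2}A_{i_2,i_3}\cdots A_{i_k,i_1})^{1/k}$. The eigencone is $V(A,\lambda)=\{x\in\mathbb{R}_+^n: A\otimes x=\lambda x\}$, and the attraction cone is $\mathrm{Attr}(A)=\{x\in\mathbb{R}_+^n:\ A^t\otimes x\in V(A,\lambda(A))\text{ for some }t\ge 0\}$ (with $A^0=I$). A matrix $A\in\mathbb{R}_+^{n\times n}$ is circulant, written $A=\mathrm{Circ}(a_0,\dots,a_{n-1})$, if $A_{i,j}=a_t$ whenever $t\in\{0,\dots,n-1\}$ and $t\equiv j-i \pmod n$. *)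

From mathcomp Require Import all_boot.
From Stdlib Require Import Reals.
Set Implicit Arguments. Unset Strict Implicit. Unset Printing Implicit Defensive.

Definition mat (n : nat) := 'I_n -> 'I_n -> R.
Definition vec (n : nat) := 'I_n -> R.

Definition nonneg_mat n (A : mat n) : Prop := forall i j, Rle 0 (A i j).
Definition nonneg_vec n (x : vec n) : Prop := forall i, Rle 0 (x i).

(* max-algebraic product (A (x) B)_{ik} = max_j A_{ij} B_{jk}; all entries
   considered are nonnegative, so 0 is a neutral element for max here. *)
Definition mp_mul n (A B : mat n) : mat n :=
  fun i k => \big[Rmax/0%R]_(j < n) Rmult (A i j) (B j k).
Definition mp_app n (A : mat n) (x : vec n) : vec n :=
  fun i => \big[Rmax/0%R]_(j < n) Rmult (A i j) (x j).
Definition mp_id n : mat n := fun i j => if i == j then 1%R else 0%R.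
Definition mp_pow n (A : mat n) (t : nat) : mat n := ssrnat.iter t (mp_mul A) (@mp_id n).

Definition is_eigenvalue n (A : mat n) (lam : R) : Prop :=
  Rle 0 lam /\
  exists x : vec n, nonneg_vec x /\ (exists i, x i <> 0%R) /\
    forall i, mp_app A x i = Rmult lam (x i).

Definition is_greatest_eigenvalue n (A : mat n) (lam : R) : Prop :=
  is_eigenvalue A lam /\ forall mu, is_eigenvalue A mu -> Rle mu lam.

Definition in_eigencone n (A : mat n) (lam : R) (x : vec n) : Prop :=
  nonneg_vec x /\ forall i, mp_app A x i = Rmult lam (x i).

(* attraction cone, w.r.t. the greatest eigenvalue lam = lambda(A) *)
Definition in_attr n (A : mat n) (lam : R) (x : vec n) : Prop :=
  nonneg_vec x /\ exists t : nat, in_eigencone A lam (mp_app (mp_pow A t) x).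

Definition circulant n (A : mat n) : Prop :=
  exists a : nat -> R, forall i j : 'I_n, A i j = a (((j + n) - i) %% n)%N.

(* For a circulant matrix the greatest eigenvalue is its largest coefficient a_t
   (the all-ones vector is an eigenvector), so every entry of A and B is at most
   lam and, when lam > 0, both A and B carry the value lam on the shifted
   diagonal i -> i + t.  Writing sigma for the cyclic shift by t, one has
   A (x) v = lam * (M_A (x) (v o sigma)), where M_A = A sigma / lam has unit
   diagonal and entries in [0, 1]; similarly M_B >= M_A.  Hence
   (A^k x)_i = lam^k (M_A^k x)_(i + k t).  An eigenvector of A is
   sigma-invariant, so x in Attr(A) makes w = M_A^k x sigma-invariant.  Powers
   of a matrix with unit diagonal and entries at most 1 stabilise after n steps
   and are monotone, so M_B^n x = M_B^n w, which is sigma-invariant because M_B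
   commutes with shifts; this makes B^n x an eigenvector of B.  If lam = 0 then
   B = 0 and every nonnegative vector is already an eigenvector. *)

From Stdlib Require Import Reals Lra FunctionalExtensionality.
From mathcomp Require Import all_boot.

Set Implicit Arguments. Unset Strict Implicit. Unset Printing Implicit Defensive.

Open Scope R_scope.

Section BigMax.

Variable n : nat.
Implicit Types F G : 'I_n -> R.

Notation bigmax F := (\big[Rmax/0]_(k < n) F k).

Lemma Rbigmax_ub F j : F j <= bigmax F.
Proof.
have : j \in index_enum 'I_n by rewrite mem_index_enum.
elim: (index_enum 'I_n) => // k r IHr.
rewrite inE big_cons; case/orP => [/eqP <-|/IHr le_Fj]; first exact: Rmax_l.
exact: Rle_trans le_Fj (Rmax_r _ _).
Qed.

Lemma Rbigmax_lub F D : 0 <= D -> (forall k, F k <= D) -> bigmax F <= D.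
Proof. by move=> D_ge0 F_le; apply: (big_ind (fun x => x <= D)) => // x y; apply: Rmax_lub. Qed.

Lemma Rbigmax_ge0 F : 0 <= bigmax F.
Proof.
apply: (big_rec (fun x => 0 <= x)) => [|k x _ x_ge0]; first lra.
exact: Rle_trans x_ge0 (Rmax_r _ _).
Qed.

Lemma Rbigmax_le F G : (forall k, F k <= G k) -> bigmax F <= bigmax G.
Proof.
move=> le_FG; apply: Rbigmax_lub => [|k]; first exact: Rbigmax_ge0.
exact: Rle_trans (le_FG k) (Rbigmax_ub G k).
Qed.

Lemma Rbigmax_attained F : bigmax F = 0 \/ exists k, bigmax F = F k.
Proof.
apply (big_rec (fun z => z = 0 \/ exists k, z = F k)); first by left.
by move=> k z _ Hz; apply Rmax_case; [right; exists k | exact: Hz].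
Qed.

Lemma Rmult_bigmax F c : 0 <= c -> c * bigmax F = \big[Rmax/0]_(k < n) (c * F k).
Proof.
move=> c_ge0; apply: (big_ind2 (fun a b => c * a = b)) => //; first exact: Rmult_0_r.
by move=> a1 a2 b1 b2 <- <-; rewrite RmaxRmult.
Qed.

End BigMax.

Section MaxAlgebra.

Variable n : nat.
Implicit Types (A M X : mat n) (v : vec n).

Lemma mp_app_ge0 A v i : 0 <= mp_app A v i.
Proof. exact: Rbigmax_ge0. Qed.

Lemma mp_app_le A A' v v' i : nonneg_mat A -> (forall i j, A i j <= A' i j) ->
  nonneg_vec v -> (forall j, v j <= v' j) -> mp_app A v i <= mp_app A' v' i.
Proof. by move=> A_ge0 le_AA' v_ge0 le_vv'; apply: Rbigmax_le => k; apply: Rmult_le_compat. Qed.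

Lemma mp_app_scale A v c i : 0 <= c -> mp_app A (fun j => c * v j) i = c * mp_app A v i.
Proof.
move=> c_ge0; rewrite /mp_app Rmult_bigmax //.
by apply: eq_bigr => k _; ring.
Qed.

Lemma mp_app_id v : nonneg_vec v -> mp_app (@mp_id n) v = v.
Proof.
move=> v_ge0; apply: functional_extensionality => i; apply: Rle_antisym.
  apply: Rbigmax_lub => // k; rewrite /mp_id; case: eqP => [<-|_]; have := v_ge0 i; lra.
by have := Rbigmax_ub (fun j => mp_id i j * v j) i; rewrite /mp_id eqxx Rmult_1_l.
Qed.

Lemma mp_app_mul A X v i : nonneg_mat A -> nonneg_mat X -> nonneg_vec v ->
  mp_app (mp_mul A X) v i = mp_app A (mp_app X v) i.
Proof.
move=> A_ge0 X_ge0 v_ge0; apply: Rle_antisym.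
  apply: Rbigmax_lub => [|j]; first exact: mp_app_ge0.
  rewrite Rmult_comm Rmult_bigmax //; apply: Rbigmax_lub => [|k]; first exact: mp_app_ge0.
  apply: Rle_trans (Rbigmax_ub (fun k => A i k * _) k); rewrite /=.
  rewrite -Rmult_assoc (Rmult_comm (v j)) Rmult_assoc; apply: Rmult_le_compat_l => //.
  by rewrite Rmult_comm; apply: (Rbigmax_ub (fun j => X k j * v j)).
apply: Rbigmax_lub => [|k]; first exact: mp_app_ge0.
rewrite Rmult_bigmax //; apply: Rbigmax_lub => [|j]; first exact: mp_app_ge0.
apply: Rle_trans (Rbigmax_ub (fun j => _ * v j) j); rewrite /= -Rmult_assoc.
by apply: Rmult_le_compat_r => //; apply: (Rbigmax_ub (fun k => A i k * X k j)).
Qed.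

Lemma mp_pow_ge0 A t : nonneg_mat A -> nonneg_mat (mp_pow A t).
Proof.
case: t => [|t] A_ge0 i j /=; last exact: Rbigmax_ge0.
by rewrite /mp_id; case: eqP => _; lra.
Qed.

Lemma mp_app_pow A t v : nonneg_mat A -> nonneg_vec v ->
  mp_app (mp_pow A t) v = iter t (mp_app A) v.
Proof.
move=> A_ge0 v_ge0; elim: t => [|t IHt] /=; first exact: mp_app_id.
apply: functional_extensionality => i; rewrite -IHt.
by apply: mp_app_mul => //; apply: mp_pow_ge0.
Qed.

Lemma iter_mp_app_ge0 M p v : nonneg_vec v -> nonneg_vec (iter p (mp_app M) v).
Proof. by case: p => [|p] //= _ i; apply: mp_app_ge0. Qed.

Lemma iter_mp_app_le M M' p v v' : nonneg_mat M -> (forall i j, M i j <= M' i j) ->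
  nonneg_vec v -> (forall j, v j <= v' j) ->
  forall i, iter p (mp_app M) v i <= iter p (mp_app M') v' i.
Proof.
move=> M_ge0 le_MM' v_ge0 le_vv'; elim: p => [|p IHp] i //=.
by apply: mp_app_le => //; apply: iter_mp_app_ge0.
Qed.

Lemma in_eigencone_zero A v : nonneg_mat A -> (forall i j, A i j <= 0) ->
  nonneg_vec v -> in_eigencone A 0 v.
Proof.
move=> A_ge0 A_le0 v_ge0; split=> // i; rewrite Rmult_0_l.
apply: Rle_antisym; last exact: mp_app_ge0.
apply: Rbigmax_lub => [|j]; first exact: Rle_refl.
by have := A_ge0 i j; have := A_le0 i j; have := v_ge0 j; nra.
Qed.

End MaxAlgebra.

Definition Rleb (a b : R) : bool := if Rle_dec a b then true else false.

Lemma RlebP a b : reflect (a <= b) (Rleb a b).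
Proof. by rewrite /Rleb; case: Rle_dec => h; constructor. Qed.

Section UnitDiagonal.

Variables (n : nat) (M : mat n).
Hypotheses (M_ge0 : nonneg_mat M) (M_le1 : forall i j, M i j <= 1)
  (M_diag : forall i, 1 <= M i i).

Lemma mp_app_ge_vec v i : nonneg_vec v -> v i <= mp_app M v i.
Proof.
move=> v_ge0; apply: Rle_trans (Rbigmax_ub (fun j => M i j * v j) i).
by have := M_diag i; have := v_ge0 i; rewrite /=; nra.
Qed.

Lemma iter_mp_app_ge_vec p v i : nonneg_vec v -> v i <= iter p (mp_app M) v i.
Proof.
move=> v_ge0; elim: p => [|p IHp] /=; first exact: Rle_refl.
by apply: Rle_trans IHp (mp_app_ge_vec _ _); apply: iter_mp_app_ge0.
Qed.

Variable x : vec n.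
Hypothesis x_ge0 : nonneg_vec x.

Let w m := iter m (mp_app M) x.

(* A strict increase at step m+1 must be fed, along a maximizing entry of M <= 1,
   by a strict increase at step m; unwinding this chain yields m indices whose
   values already reach the new one. *)
Lemma iter_mp_app_incr_card m i : w m i < w m.+1 i ->
  (m <= #|[set k | Rleb (w m.+1 i) (w m k)]|)%N.
Proof.
have w_ge0 p : nonneg_vec (w p) by apply: iter_mp_app_ge0.
elim: m i => [//|m IHm] i lt_wi.
have [w0|[j wj]] := Rbigmax_attained (fun j => M i j * w m.+1 j).
  have w2 : w m.+2 i = 0 by rewrite -w0.
  by have := w_ge0 m.+1 i; lra.
have {}wj : w m.+2 i = M i j * w m.+1 j by [].
have lt_wj : w m j < w m.+1 j.
  apply: Rnot_le_lt => le_wj; apply: (Rlt_not_le _ _ lt_wi).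
  rewrite wj; apply: Rle_trans (Rbigmax_ub (fun j => M i j * w m j) j).
  exact: Rmult_le_compat_l.
have le_wij : w m.+2 i <= w m.+1 j.
  by rewrite wj; have := M_le1 i j; have := M_ge0 i j; have := w_ge0 m.+1 j; nra.
set S := [set k | Rleb (w m.+1 j) (w m k)].
have j_notin : j \notin S by rewrite inE; apply/RlebP; lra.
apply: (@leq_trans #|j |: S|); first by rewrite cardsU1 j_notin add1n ltnS IHm.
apply: subset_leq_card; apply/subsetP => k; rewrite !inE.
case/orP => [/eqP ->|/RlebP le_wk]; apply/RlebP => //.
have le_wmk : w m k <= w m.+1 k := mp_app_ge_vec k (w_ge0 m).
lra.
Qed.

Lemma iter_mp_app_stable i : iter n.+1 (mp_app M) x i = iter n (mp_app M) x i.
Proof.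
apply: Rle_antisym; last by apply: mp_app_ge_vec; apply: iter_mp_app_ge0.
apply: Rnot_lt_le => lt_wi.
have i_notin : i \notin [set k | Rleb (w n.+1 i) (w n k)].
  by rewrite inE; apply/RlebP; rewrite /w; lra.
have le_card := @iter_mp_app_incr_card n i lt_wi.
have := max_card (i |: [set k | Rleb (w n.+1 i) (w n k)]).
rewrite cardsU1 i_notin card_ord add1n => lt_card.
by have := leq_ltn_trans le_card lt_card; rewrite ltnn.
Qed.

Lemma iter_mp_app_stable_add p i :
  iter (n + p) (mp_app M) x i = iter n (mp_app M) x i.
Proof.
elim: p i => [|p IHp] i; first by rewrite addn0.
rewrite addnS iterS -iter_mp_app_stable /=.
by congr (mp_app M _ i); apply: functional_extensionality.
Qed.

End UnitDiagonal.

Lemma iter_mp_app_stable_absorb n (M M' : mat n) k x :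
  nonneg_mat M -> (forall i, 1 <= M i i) -> (forall i j, M i j <= M' i j) ->
  (forall i j, M' i j <= 1) -> nonneg_vec x -> forall i,
  iter n (mp_app M') (iter k (mp_app M) x) i = iter n (mp_app M') x i.
Proof.
move=> M_ge0 M_diag le_MM' M'_le1 x_ge0 i.
have M'_ge0 : nonneg_mat M' by move=> i' j; exact: Rle_trans (M_ge0 i' j) (le_MM' i' j).
have M'_diag i' : 1 <= M' i' i' by exact: Rle_trans (M_diag i') (le_MM' i' i').
apply: Rle_antisym.
  rewrite -[in X in _ <= X](iter_mp_app_stable_add M'_ge0 M'_le1 M'_diag x_ge0 k) iterD.
  apply: iter_mp_app_le => // [i' j||j]; [exact: Rle_refl | exact: iter_mp_app_ge0 |].
  by apply: iter_mp_app_le => // j'; apply: Rle_refl.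
apply: iter_mp_app_le => // [i' j|j]; first exact: Rle_refl.
exact: iter_mp_app_ge_vec.
Qed.

Section Shift.

Variable n : nat.
Implicit Types (C M : mat n.+1) (v : vec n.+1).

Definition sh (s : nat) (i : 'I_n.+1) : 'I_n.+1 := inord ((i + s) %% n.+1).

Lemma sh_val s i : sh s i = (i + s) %% n.+1 :> nat.
Proof. by rewrite inordK // ltn_pmod. Qed.

Lemma shD a b i : sh a (sh b i) = sh (b + a) i.
Proof. by apply: val_inj; rewrite /= !sh_val modnDml addnA. Qed.

Lemma shC a b i : sh a (sh b i) = sh b (sh a i).
Proof. by rewrite !shD addnC. Qed.

Lemma sh_mod0 s i : s %% n.+1 = 0%N -> sh s i = i.
Proof. by move=> s0; apply: val_inj; rewrite /= sh_val -modnDmr s0 addn0 modn_small. Qed.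

Lemma sh_onto s j : sh s (sh (n.+1 - s %% n.+1) j) = j.
Proof. by rewrite shD sh_mod0 // -modnDmr subnK ?modnn // ltnW // ltn_pmod. Qed.

Lemma sh_ord0 (i : 'I_n.+1) : sh i ord0 = i.
Proof. by apply: val_inj; rewrite /= sh_val add0n modn_small. Qed.

Definition shift_invariant C := forall s i j, C (sh s i) (sh s j) = C i j.

Lemma circulant_shift_invariant C : circulant C -> shift_invariant C.
Proof.
case=> a Ca s i j; rewrite !Ca !sh_val -!plusE -!minusE; congr (a _).
apply/eqP; rewrite -(eqn_modDr (i + s)) -modnDmr subnK; last first.
  by apply: leq_trans (ltnW (ltn_pmod _ _)) (leq_addl _ _).
rewrite modnDr addnA subnK; last exact: leq_trans (ltnW (ltn_ord i)) (leq_addl _ _).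
by rewrite modn_mod -addnA (addnC n.+1) addnA modnDr.
Qed.

Lemma Rbigmax_sh (F : 'I_n.+1 -> R) s :
  \big[Rmax/0]_(j < n.+1) F (sh s j) = \big[Rmax/0]_(j < n.+1) F j.
Proof.
apply: Rle_antisym; apply: Rbigmax_lub => [|k]; try exact: Rbigmax_ge0.
  exact: Rbigmax_ub.
by rewrite -[k](sh_onto s); apply: (Rbigmax_ub (fun j => F (sh s j))).
Qed.

Lemma mp_app_sh C v s i : shift_invariant C ->
  mp_app C (fun j => v (sh s j)) i = mp_app C v (sh s i).
Proof.
move=> C_sh; rewrite /mp_app -[RHS](Rbigmax_sh _ s).
by apply: eq_bigr => j _; rewrite C_sh.
Qed.

Lemma iter_mp_app_sh M p v s i : shift_invariant M ->
  iter p (mp_app M) (fun j => v (sh s j)) i = iter p (mp_app M) v (sh s i).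
Proof.
move=> M_sh; elim: p i => [|p IHp] i //=.
rewrite -mp_app_sh //; congr (mp_app M _ i).
by apply: functional_extensionality => j; apply: IHp.
Qed.

End Shift.

Section CirculantEigenvalue.

Variables (n : nat) (C : mat n.+1).
Hypotheses (C_ge0 : nonneg_mat C) (C_sh : shift_invariant C).

Let ones : vec n.+1 := fun _ => 1.
Let r := mp_app C ones ord0.

Lemma mp_app_ones_const i : mp_app C ones i = r.
Proof. by rewrite -[i]sh_ord0 -mp_app_sh. Qed.

Lemma le_eigenvalue_row_max lam : is_eigenvalue C lam -> lam <= r.
Proof.
case=> _ [x [x_ge0 [[k xk_neq0] Cx]]].
have [x0|[i0 xi0]] := Rbigmax_attained x.
  by have := Rbigmax_ub x k; have := x_ge0 k; lra.
have x_le j : x j <= x i0 by rewrite -xi0; apply: Rbigmax_ub.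
have xi0_gt0 : 0 < x i0 by have := x_le k; have := x_ge0 k; lra.
apply: (Rmult_le_reg_r (x i0)) => //; rewrite -Cx.
rewrite -(mp_app_ones_const i0) Rmult_comm -mp_app_scale; last lra.
by apply: mp_app_le => // [i j|j]; [apply: Rle_refl | rewrite /ones Rmult_1_r].
Qed.

Lemma row_max_eigenvalue : is_eigenvalue C r.
Proof.
split; first exact: mp_app_ge0.
exists ones; split; first by move=> i; rewrite /ones; lra.
split; first by exists ord0; rewrite /ones; lra.
by move=> i; rewrite mp_app_ones_const /ones Rmult_1_r.
Qed.

Lemma circulant_greatest_eigenvalue lam : is_greatest_eigenvalue C lam -> lam = r.
Proof.
case=> lam_eig lam_max; apply: Rle_antisym; first exact: le_eigenvalue_row_max.
exact: lam_max row_max_eigenvalue.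
Qed.

Lemma le_greatest_eigenvalue lam i j : is_greatest_eigenvalue C lam -> C i j <= lam.
Proof.
move/circulant_greatest_eigenvalue => ->; rewrite -(mp_app_ones_const i).
by rewrite -[C i j]Rmult_1_r; apply: (Rbigmax_ub (fun j => C i j * 1)).
Qed.

Lemma greatest_eigenvalue_attained lam : is_greatest_eigenvalue C lam -> 0 < lam ->
  exists t : 'I_n.+1, forall i, C i (sh t i) = lam.
Proof.
move=> /circulant_greatest_eigenvalue lam_r lam_gt0.
have [r0|[t rt]] := Rbigmax_attained (fun j => C ord0 j * ones j).
  by rewrite -/(mp_app C ones ord0) -/r in r0; lra.
exists t => i; rewrite lam_r /r /mp_app rt /ones Rmult_1_r -(C_sh i ord0 t) sh_ord0.
by congr (C i _); apply: val_inj; rewrite /= !sh_val addnC.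
Qed.

End CirculantEigenvalue.

Definition normalized_mx n (C : mat n.+1) (lam : R) (t : nat) : mat n.+1 :=
  fun i j => C i (sh t j) / lam.

Section Normalized.

Variables (n : nat) (C : mat n.+1) (lam : R) (t : nat).
Hypotheses (C_ge0 : nonneg_mat C) (C_sh : shift_invariant C) (lam_gt0 : 0 < lam)
  (C_diag : forall i, C i (sh t i) = lam).

Let M := normalized_mx C lam t.

Lemma normalized_mx_ge0 : nonneg_mat M.
Proof. by move=> i j; apply: Rmult_le_pos => //; apply: Rlt_le; apply: Rinv_0_lt_compat. Qed.

Lemma normalized_mx_le1 : (forall i j, C i j <= lam) -> forall i j, M i j <= 1.
Proof.
move=> C_le i j; rewrite /M /normalized_mx /Rdiv -(Rinv_r lam); last lra.
by apply: Rmult_le_compat_r; [apply: Rlt_le; apply: Rinv_0_lt_compat | apply: C_le].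
Qed.

Lemma normalized_mx_diag i : 1 <= M i i.
Proof. by rewrite /M /normalized_mx C_diag /Rdiv Rinv_r; lra. Qed.

Lemma normalized_mx_shift_invariant : shift_invariant M.
Proof. by move=> s i j; rewrite /M /normalized_mx shC C_sh. Qed.

Lemma mp_app_normalized_mx v i :
  mp_app C v i = lam * mp_app M (fun j => v (sh t j)) i.
Proof.
rewrite /mp_app Rmult_bigmax; last lra.
rewrite -(Rbigmax_sh _ t); apply: eq_bigr => j _; rewrite /M /normalized_mx.
by field; lra.
Qed.

Lemma iter_mp_app_normalized_mx m x i :
  iter m (mp_app C) x i = lam ^ m * iter m (mp_app M) x (sh (m * t) i).
Proof.
elim: m i => [|m IHm] i /=; first by rewrite mul0n sh_mod0 ?mod0n //; ring.
rewrite mp_app_normalized_mx.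
have -> : (fun j => iter m (mp_app C) x (sh t j)) =
          (fun j => lam ^ m * iter m (mp_app M) x (sh (m.+1 * t) j)).
  by apply: functional_extensionality => j; rewrite IHm shD mulSn.
rewrite mp_app_scale; last by apply: pow_le; lra.
by rewrite mp_app_sh //; [ring | apply: normalized_mx_shift_invariant].
Qed.

Lemma eigenvector_sh_invariant y : nonneg_vec y ->
  (forall i, mp_app C y i = lam * y i) -> forall i, y (sh t i) = y i.
Proof.
move=> y_ge0 Cy.
have y_sh_le i : y (sh t i) <= y i.
  apply: (Rmult_le_reg_l lam) => //; rewrite -(Cy i) -[in X in X * _](C_diag i).
  exact: (Rbigmax_ub (fun j => C i j * y j)).
have y_shm_le m i : y (sh (m * t) i) <= y i.
  elim: m i => [|m IHm] i; first by rewrite mul0n sh_mod0 ?mod0n //; apply: Rle_refl.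
  by rewrite mulSn -shD; apply: Rle_trans (IHm _) (y_sh_le i).
move=> i; apply: Rle_antisym => //.
by have := y_shm_le n (sh t i); rewrite shD -mulSn sh_mod0 // modnMr.
Qed.

Lemma attractor_sh_invariant k x : nonneg_vec x ->
  (forall i, mp_app C (iter k (mp_app C) x) i = lam * iter k (mp_app C) x i) ->
  forall i, iter k (mp_app M) x (sh t i) = iter k (mp_app M) x i.
Proof.
move=> x_ge0 /eigenvector_sh_invariant y_sh i.
have lamk_gt0 : 0 < lam ^ k by apply: pow_lt.
rewrite -[i](sh_onto (k * t)) shC; apply: (Rmult_eq_reg_l (lam ^ k)); last lra.
by rewrite -!iter_mp_app_normalized_mx y_sh //; apply: iter_mp_app_ge0.
Qed.

Lemma iter_mp_app_in_eigencone x : (forall i j, C i j <= lam) -> nonneg_vec x ->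
  (forall i, iter n.+1 (mp_app M) x (sh t i) = iter n.+1 (mp_app M) x i) ->
  in_eigencone C lam (iter n.+1 (mp_app C) x).
Proof.
move=> C_le x_ge0 W_sh; split=> [|i]; first exact: iter_mp_app_ge0.
have M_stable j : iter n.+2 (mp_app M) x j = iter n.+1 (mp_app M) x j.
  have := iter_mp_app_stable_add normalized_mx_ge0 (normalized_mx_le1 C_le)
    normalized_mx_diag x_ge0 1 j.
  by rewrite addn1.
rewrite -iterS !iter_mp_app_normalized_mx M_stable mulSnr -shD W_sh /=; ring.
Qed.

End Normalized.

Lemma in_attr_le_shift_invariant n (A B : mat n.+1) lam t x :
  nonneg_mat A -> shift_invariant A -> shift_invariant B -> 0 < lam ->
  (forall i, A i (sh t i) = lam) -> (forall i j, A i j <= B i j) ->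
  (forall i j, B i j <= lam) -> in_attr A lam x -> in_attr B lam x.
Proof.
move=> A_ge0 A_sh B_sh lam_gt0 A_diag le_AB B_le [x_ge0 [k [_ Ay]]].
have B_ge0 : nonneg_mat B by move=> i j; apply: Rle_trans (A_ge0 i j) (le_AB i j).
have B_diag i : B i (sh t i) = lam.
  by apply: Rle_antisym => //; rewrite -[in X in X <= _](A_diag i).
set MA := normalized_mx A lam t; set MB := normalized_mx B lam t.
rewrite mp_app_pow // in Ay.
have w_sh := attractor_sh_invariant A_sh lam_gt0 A_diag x_ge0 Ay.
have MA_le_MB i j : MA i j <= MB i j.
  by apply: Rmult_le_compat_r => //; apply: Rlt_le; apply: Rinv_0_lt_compat.
have W_eq := iter_mp_app_stable_absorb k (normalized_mx_ge0 t A_ge0 lam_gt0)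
  (normalized_mx_diag lam_gt0 A_diag) MA_le_MB (normalized_mx_le1 t lam_gt0 B_le) x_ge0.
split=> //; exists n.+1; rewrite mp_app_pow //.
apply: iter_mp_app_in_eigencone => // i; rewrite -!W_eq -iter_mp_app_sh.
  by congr (iter _ _ _ i); apply: functional_extensionality.
exact: normalized_mx_shift_invariant.
Qed.

Theorem theorem3 (n : nat) (A B : mat n) (lam : R) :
  nonneg_mat A -> nonneg_mat B ->
  circulant A -> circulant B ->
  is_greatest_eigenvalue A lam -> is_greatest_eigenvalue B lam ->
  (forall i j, Rle (A i j) (B i j)) ->
  forall x : vec n, in_attr A lam x -> in_attr B lam x.
Proof.
case: n A B => [|n] A B A_ge0 B_ge0 A_circ B_circ A_lam B_lam le_AB x [x_ge0 x_attr].
  by split=> //; exists 0%N; split; case.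
have A_sh := circulant_shift_invariant A_circ.
have B_sh := circulant_shift_invariant B_circ.
have B_le i j := le_greatest_eigenvalue B_ge0 B_sh i j B_lam.
have [lam_gt0|lam_eq0] := Rle_lt_or_eq_dec 0 lam (proj1 (proj1 A_lam)).
  have [t A_diag] := greatest_eigenvalue_attained A_ge0 A_sh A_lam lam_gt0.
  exact: in_attr_le_shift_invariant A_sh B_sh lam_gt0 A_diag le_AB B_le _.
split=> //; exists 0%N; rewrite mp_app_pow //= -lam_eq0; rewrite -lam_eq0 in B_le.
by apply: in_eigencone_zero.
Qed.
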